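(* Let $w\in S_n$. If $|C(w)|=1$ then $|B(w)|=|R(w)|$, and if $|B(w)|=1$ then $|C(w)|=|R(w)|$.
   Context: $S_n$ is generated by the adjacent transpositions $s_1,\dots,s_{n-1}$. A reduced word for $w$ is a word $i_1\cdots i_k$ with $w=s_{i_1}\cdots s_{i_k}$ and $k$ minimal; $R(w)$ is the set of reduced words. A braid move replaces a factor (consecutive letters) $i(i+1)i$ by $(i+1)i(i+1)$ or vice versa; a commutation move replaces a factor $ij$ with $|i-j|>1$ by $ji$. $B(w)$ (resp. $C(w)$) is the set of equivalence classes of $R(w)$ under sequences of braid moves (resp. commutation moves). *)

From Stdlib Require Import Relation_Operators.
From mathcomp Require Import all_boot all_order all_fingroup.
From mathcomp Require Import boolp classical_sets cardinality.
Set Implicit Arguments. Unset Strict Implicit. Unset Printing Implicit Defensive.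
Local Open Scope classical_set_scope.

(* Adjacent transposition s_i in S_n = 'S_n (permutations of 'I_n = {0,..,n-1}),
   with the paper's 1-based letters: s_i swaps positions i-1 and i (0-based),
   i.e. i and i+1 in 1-based numbering. Only letters 1 <= i <= n-1 are used. *)
Definition sadj (n i : nat) : 'S_n :=
  match n return 'S_n with
  | 0 => 1%g
  | m.+1 => tperm (inord i.-1 : 'I_m.+1) (inord i)
  end.

Definition valid_word (n : nat) (s : seq nat) : bool :=
  all (fun i => (0 < i) && (i < n)) s.

Definition word_prod (n : nat) (s : seq nat) : 'S_n :=
  (\prod_(i <- s) sadj n i)%g.

Definition reduced (n : nat) (w : 'S_n) (s : seq nat) : Prop :=
  [/\ valid_word n s, word_prod n s = w &
      forall t, valid_word n t -> word_prod n t = w -> size s <= size t].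

Definition Rw (n : nat) (w : 'S_n) : set (seq nat) := [set s | reduced w s].

Definition braid_move (s t : seq nat) : Prop :=
  exists u v i,
    (s = u ++ [:: i; i.+1; i] ++ v /\ t = u ++ [:: i.+1; i; i.+1] ++ v) \/
    (s = u ++ [:: i.+1; i; i.+1] ++ v /\ t = u ++ [:: i; i.+1; i] ++ v).

Definition comm_move (s t : seq nat) : Prop :=
  exists u v i j, ((i.+1 < j) || (j.+1 < i)) /\
    s = u ++ [:: i; j] ++ v /\ t = u ++ [:: j; i] ++ v.

Definition braid_equiv := clos_refl_trans (seq nat) braid_move.
Definition comm_equiv := clos_refl_trans (seq nat) comm_move.

Definition classes_of (n : nat) (w : 'S_n) (eqv : seq nat -> seq nat -> Prop)
  : set (set (seq nat)) :=
  [set [set t | Rw w t /\ eqv s t] | s in Rw w].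

Definition Bw (n : nat) (w : 'S_n) := classes_of w braid_equiv.
Definition Cw (n : nat) (w : 'S_n) := classes_of w comm_equiv.

(* A commutation move preserves the multiset of letters, while a braid move
   i(i+1)i <-> (i+1)i(i+1) changes it; so if all reduced words of w are
   commutation equivalent, no braid move can apply to a reduced word (it would
   produce another reduced word), every braid class is a singleton, and
   |B(w)| = |R(w)|.  Dually, sending the letters <= m to s_1 and the letters
   > m to s_2 in S_3 gives a braid invariant of words, and a commutation move
   ij -> ji with i + 1 < j changes it for m = i; so if |B(w)| = 1 no
   commutation move applies to a reduced word and |C(w)| = |R(w)|. *)

From Stdlib Require Import Relation_Operators.
From mathcomp Require Import all_boot all_order all_fingroup.
From mathcomp Require Import boolp classical_sets cardinality.
From mathcomp Require Import zify.
Local Open Scope classical_set_scope.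
Local Open Scope card_scope.

Section Transpositions.
Variables (T : finType) (a b c : T).
Hypotheses (neq_ab : a != b) (neq_bc : b != c) (neq_ac : a != c).

Lemma tperm_braid :
  (tperm a b * tperm b c * tperm a b = tperm b c * tperm a b * tperm b c)%g.
Proof.
rewrite -[LHS]mulgA -[RHS]mulgA -{1}(tpermV a b) -{2}(tpermV b c).
rewrite -!conjgE !tpermJ tpermR tpermL.
by rewrite !tpermD // eq_sym.
Qed.

Lemma tperm_noncommute :
  (tperm a b * tperm b c != tperm b c * tperm a b)%g.
Proof.
apply/eqP => /(congr1 (fun p : {perm T} => p a)); rewrite !permM !tpermL.
by rewrite [tperm b c a]tpermD 1?eq_sym // tpermL => /eqP; rewrite eq_sym (negbTE neq_bc).
Qed.

End Transpositions.

Lemma tperm_commute (T : finType) (a b c d : T) :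
  a != c -> a != d -> b != c -> b != d ->
  (tperm a b * tperm c d = tperm c d * tperm a b)%g.
Proof.
move=> ac ad bc bd; apply/commgP/conjg_fixP.
by rewrite tpermJ !tpermD // eq_sym.
Qed.

Section Words.
Set Implicit Arguments. Unset Strict Implicit.
Variable n : nat.

Lemma sadj_braid i : 0 < i -> i.+1 < n ->
  (sadj n i * sadj n i.+1 * sadj n i = sadj n i.+1 * sadj n i * sadj n i.+1)%g.
Proof. by case: n => [//|m] i0 im; apply: tperm_braid; rewrite -val_eqE /= !inordK; lia. Qed.

Lemma sadj_noncommute i : 0 < i -> i.+1 < n ->
  (sadj n i * sadj n i.+1 != sadj n i.+1 * sadj n i)%g.
Proof. by case: n => [//|m] i0 im; apply: tperm_noncommute; rewrite -val_eqE /= !inordK; lia. Qed.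

Lemma sadj_commute i j : 0 < i -> i.+1 < j -> j < n ->
  (sadj n i * sadj n j = sadj n j * sadj n i)%g.
Proof. by case: n => [//|m] i0 ij jm; apply: tperm_commute; rewrite -val_eqE /= !inordK; lia. Qed.

Lemma word_prod_cat s t :
  word_prod n (s ++ t) = (word_prod n s * word_prod n t)%g.
Proof. exact: big_cat. Qed.

Lemma valid_word_cat s t :
  valid_word n (s ++ t) = valid_word n s && valid_word n t.
Proof. exact: all_cat. Qed.

Lemma reduced_replace_factor (w : 'S_n) u x y v :
  reduced w (u ++ x ++ v) -> size x = size y -> valid_word n y ->
  word_prod n x = word_prod n y -> reduced w (u ++ y ++ v).
Proof.
move=> [vs <- min_s] sxy vy pxy; split.
- by move: vs; rewrite !valid_word_cat vy => /and3P[-> _ ->].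
- by rewrite !word_prod_cat pxy.
- by move=> t vt /(min_s t vt); rewrite !size_cat sxy.
Qed.

Lemma reduced_valid_factor (w : 'S_n) u x v :
  reduced w (u ++ x ++ v) -> valid_word n x.
Proof. by case; rewrite !valid_word_cat => /and3P[]. Qed.

Lemma valid_braid_factors i :
  valid_word n [:: i; i.+1; i] = valid_word n [:: i.+1; i; i.+1].
Proof. by rewrite /valid_word /=; apply/idP/idP; lia. Qed.

Lemma word_prod_braid_factors i : valid_word n [:: i; i.+1; i] ->
  word_prod n [:: i; i.+1; i] = word_prod n [:: i.+1; i; i.+1].
Proof.
move=> vx; rewrite /word_prod !big_cons big_nil !mulg1 !mulgA.
by apply: sadj_braid; move: vx; rewrite /valid_word /=; lia.
Qed.

Lemma braid_move_reduced (w : 'S_n) s t :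
  reduced w s -> braid_move s t -> reduced w t.
Proof.
move=> rs [u [v [i [[es ->]|[es ->]]]]]; rewrite es in rs;
  have vx := reduced_valid_factor rs; apply: reduced_replace_factor rs _ _ _ => //.
- by rewrite -valid_braid_factors.
- exact: word_prod_braid_factors.
- by rewrite valid_braid_factors.
- by rewrite word_prod_braid_factors // valid_braid_factors.
Qed.

Lemma comm_move_reduced (w : 'S_n) s t :
  reduced w s -> comm_move s t -> reduced w t.
Proof.
move=> rs [u [v [i [j [ij [es ->]]]]]]; rewrite es in rs.
have /and3P[/andP[i0 ltin] /andP[j0 ltjn] _] := reduced_valid_factor rs.
apply: reduced_replace_factor rs _ _ _ => //; first by rewrite /valid_word /= i0 ltin j0 ltjn.
rewrite /word_prod !big_cons big_nil !mulg1.
by case/orP: ij => ij; [|symmetry]; apply: sadj_commute.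
Qed.

End Words.

Lemma comm_equiv_perm_eq s t : comm_equiv s t -> perm_eq s t.
Proof.
elim=> {s t} [s t [u [v [i [j [_ [-> ->]]]]]] | s | s1 s2 s3 _ perm12 _ perm23].
- by rewrite perm_cat2l perm_cat2r (perm_catC [:: i] [:: j]).
- exact: perm_refl.
- exact: perm_trans perm12 perm23.
Qed.

Lemma braid_move_count s t : braid_move s t -> exists i, count_mem i s != count_mem i t.
Proof.
move=> [u [v [i [[-> ->]|[-> ->]]]]]; exists i; rewrite !count_cat /= eqxx.
all: by rewrite (gtn_eqF (ltnSn i)); lia.
Qed.

Lemma braid_move_not_comm_equiv s t : braid_move s t -> ~ comm_equiv s t.
Proof.
move=> /braid_move_count[i count_i] /comm_equiv_perm_eq/seq.permP count_st.
by rewrite count_st eqxx in count_i.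
Qed.

(* Only an invariant of braid classes, not a homomorphism on S_n: the letters
   m and m + 2 commute, while their images s_1 and s_2 do not. *)
Definition collapse (m : nat) (s : seq nat) : 'S_3 :=
  word_prod 3 [seq if k <= m then 1 else 2 | k <- s].

Lemma collapse_cat m s t : collapse m (s ++ t) = (collapse m s * collapse m t)%g.
Proof. by rewrite /collapse map_cat word_prod_cat. Qed.

Lemma collapse_braid_factors m i :
  collapse m [:: i; i.+1; i] = collapse m [:: i.+1; i; i.+1].
Proof.
rewrite /collapse /word_prod /= !big_cons big_nil !mulg1 !mulgA.
by case: (ltngtP i m) => // _; exact: sadj_braid.
Qed.

Lemma braid_equiv_collapse s t : braid_equiv s t -> forall m, collapse m s = collapse m t.
Proof.
elim=> {s t} [s t [u [v [i [[-> ->]|[-> ->]]]]] | // | s1 s2 s3 _ eq12 _ eq23] m.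
- by rewrite !collapse_cat collapse_braid_factors.
- by rewrite !collapse_cat collapse_braid_factors.
- by rewrite eq12 eq23.
Qed.

Lemma comm_move_collapse s t : comm_move s t -> exists m, collapse m s != collapse m t.
Proof.
have collapse_pair i j : i.+1 < j -> collapse i [:: i; j] != collapse i [:: j; i].
  move=> ij; rewrite /collapse /word_prod /= !big_cons big_nil !mulg1 leqnn.
  by rewrite leqNgt (ltn_trans _ ij) //; exact: sadj_noncommute.
move=> [u [v [i [j [ij [-> ->]]]]]].
case/orP: ij => [ij | ji]; [exists i | exists j]; rewrite !collapse_cat.
- by rewrite (inj_eq (mulgI _)) (inj_eq (mulIg _)) collapse_pair.
- by rewrite (inj_eq (mulgI _)) (inj_eq (mulIg _)) eq_sym collapse_pair.
Qed.

Lemma comm_move_not_braid_equiv s t : comm_move s t -> ~ braid_equiv s t.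
Proof.
move=> /comm_move_collapse[m collapse_m] /braid_equiv_collapse collapse_st.
by rewrite collapse_st eqxx in collapse_m.
Qed.

Lemma card_I1_uniq (T : Type) (A : set T) :
  A #= `I_1 -> forall x y, A x -> A y -> x = y.
Proof.
rewrite II1 => /card_set_bijP[f [f_into f_inj _]] x y Ax Ay.
by apply: f_inj; rewrite ?inE // (f_into x Ax) (f_into y Ay).
Qed.

Section Classes.
Variables (n : nat) (w : 'S_n).

Lemma classes_of_card1_equiv (eqv : seq nat -> seq nat -> Prop) :
  (forall s, eqv s s) -> classes_of w eqv #= `I_1 ->
  forall s t, Rw w s -> Rw w t -> eqv s t.
Proof.
move=> eqv_refl /card_I1_uniq same_class s t Rs Rt.
have class_st := same_class _ _ (imageP _ Rs) (imageP _ Rt).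
have : [set r | Rw w r /\ eqv s r] t by rewrite class_st; split; last exact: eqv_refl.
by case.
Qed.

Lemma classes_of_rt_card (mv : seq nat -> seq nat -> Prop) :
  (forall s t, Rw w s -> ~ mv s t) ->
  classes_of w (clos_refl_trans _ mv) #= Rw w.
Proof.
move=> stuck.
have rt_stuck s t : clos_refl_trans _ mv s t -> Rw w s -> s = t.
  elim=> {s t} [s t mv_st Rs | // | s1 s2 s3 _ eq12 _ eq23 R1].
  - by case: (stuck _ _ Rs mv_st).
  - by move: (eq12 R1) eq23 => <- /(_ R1).
have -> : classes_of w (clos_refl_trans _ mv) = set1 @` Rw w.
  apply: eq_imagel => s Rs; apply/seteqP; split=> t /=.
  - by case=> _ /rt_stuck/(_ Rs) ->.
  - by move=> ->; split; last exact: rt_refl.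
apply: inj_card_eq => s t _ _ /(congr1 (fun A => A s)).
by rewrite /set1 /mkset => <-.
Qed.

Lemma classes_of_rt_card_separated (mv eqv : seq nat -> seq nat -> Prop) :
  (forall s t, reduced w s -> mv s t -> reduced w t) ->
  (forall s, eqv s s) ->
  (forall s t, mv s t -> ~ eqv s t) ->
  classes_of w eqv #= `I_1 -> classes_of w (clos_refl_trans _ mv) #= Rw w.
Proof.
move=> mv_reduced eqv_refl mv_separates one_class.
apply: classes_of_rt_card => s t Rs mv_st.
apply: (mv_separates _ _ mv_st).
exact: classes_of_card1_equiv one_class _ _ Rs (mv_reduced _ _ Rs mv_st).
Qed.

End Classes.

Theorem lemma4p7 (n : nat) (w : 'S_n) :
  (Cw w #= `I_1 -> Bw w #= Rw w) /\
  (Bw w #= `I_1 -> Cw w #= Rw w).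
Proof.
split; apply: classes_of_rt_card_separated.
- exact: braid_move_reduced.
- exact: rt_refl.
- exact: braid_move_not_comm_equiv.
- exact: comm_move_reduced.
- exact: rt_refl.
- exact: comm_move_not_braid_equiv.
Qed.
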